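(* Let $G$ be a graph (of arbitrary cardinality) which is a lexicographic sum, indexed by a finite graph, of graphs each of which is a clique or an independent set. Then every graph equimorphic to $G$ is isomorphic to $G$; that is, $G$ has exactly one sibling up to isomorphism.
   Context: Graphs are undirected and loopless. $G$ embeds into $G'$ if $G$ is isomorphic to an induced subgraph of $G'$; $G,G'$ are equimorphic if each embeds into the other. If $H$ is a graph on a vertex set $J$ and $(L_j)_{j\in J}$ are graphs, the lexicographic sum of the $L_j$ indexed by $H$ is the graph on the disjoint union of the vertex sets of the $L_j$ in which two vertices of the same $L_j$ are adjacent iff they are adjacent in $L_j$, and $x\in L_i$, $y\in L_j$ with $i\neq j$ are adjacent iff $\{i,j\}$ is an edge of $H$. The cliques and independent sets may be infinite. *)

From mathcomp Require Import all_boot.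
Set Implicit Arguments. Unset Strict Implicit. Unset Printing Implicit Defensive.

Definition is_graph (V : Type) (E : V -> V -> Prop) : Prop :=
  (forall x y, E x y -> E y x) /\ (forall x, ~ E x x).

Definition embeds (V : Type) (E : V -> V -> Prop)
                  (V' : Type) (E' : V' -> V' -> Prop) : Prop :=
  exists f : V -> V', injective f /\ forall x y, E x y <-> E' (f x) (f y).

Definition equimorphic (V : Type) (E : V -> V -> Prop)
                       (V' : Type) (E' : V' -> V' -> Prop) : Prop :=
  embeds E E' /\ embeds E' E.

Definition isomorphic (V : Type) (E : V -> V -> Prop)
                      (V' : Type) (E' : V' -> V' -> Prop) : Prop :=
  exists f : V -> V', bijective f /\ forall x y, E x y <-> E' (f x) (f y).

Definition is_clique (V : Type) (E : V -> V -> Prop) : Prop :=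
  forall x y, x <> y -> E x y.

Definition is_independent (V : Type) (E : V -> V -> Prop) : Prop :=
  forall x y, ~ E x y.

Inductive lexsum_adj (J : Type) (H : J -> J -> Prop) (L : J -> Type)
    (EL : forall j, L j -> L j -> Prop) : {j : J & L j} -> {j : J & L j} -> Prop :=
| lexsum_in (j : J) (x y : L j) :
    EL j x y -> lexsum_adj H EL (existT L j x) (existT L j y)
| lexsum_out (i j : J) (x : L i) (y : L j) :
    i <> j -> H i j -> lexsum_adj H EL (existT L i x) (existT L j y).

From mathcomp Require Import all_boot all_fingroup.
From mathcomp Require Import boolp.
Set Implicit Arguments. Unset Strict Implicit. Unset Printing Implicit Defensive.

(* Call two vertices twins when they have the same neighbours apart from each
   other.  Twinship is an equivalence; in the lexicographic sum all vertices of
   a block (a clique or an independent set) are twins, so a twin class is the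
   union of the blocks it meets and there are finitely many twin classes.  An
   embedding reflects twinship, so the self-embedding phi = h o e of G (built
   from e : G -> G' and h : G' -> G) induces an injection, hence a permutation,
   of the finite set of twin classes, and some power psi = phi^m maps every
   vertex to a twin.  Shifting by psi along the psi-chains that start outside
   the image of h, and fixing all other vertices, is a bijection theta of G
   onto the image of h moving every vertex to a twin; such a map preserves
   adjacency, so h^-1 o theta is an isomorphism from G onto G'. *)

Section Twins.

Variables (V : Type) (E : V -> V -> Prop).
Hypothesis E_sym : forall x y, E x y -> E y x.
Hypothesis E_irr : forall x, ~ E x x.

Definition twins (x y : V) : Prop :=
  forall z, z <> x -> z <> y -> (E x z <-> E y z).

Lemma twins_refl x : twins x x.
Proof. by move=> z; split. Qed.

Lemma twins_sym x y : twins x y -> twins y x.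
Proof. by move=> txy z zy zx; apply: iff_sym; apply: txy. Qed.

Lemma adjC x y : E x y <-> E y x.
Proof. by split; apply: E_sym. Qed.

Lemma twins_trans x y z : twins x y -> twins y z -> twins x z.
Proof.
move=> txy tyz.
have [exy|nxy] := pselect (x = y); first by rewrite exy.
have [eyz|nyz] := pselect (y = z); first by rewrite -eyz.
have [<-|nxz] := pselect (x = z); first exact: twins_refl.
move=> w wx wz; have [->|wy] := pselect (w = y); last first.
  exact: iff_trans (txy w wx wy) (tyz w wy wz).
rewrite adjC (adjC z); apply: iff_trans (tyz x nxy nxz) _.
rewrite adjC; apply: (txy z) => ez.
- by apply: nxz; rewrite ez.
- by apply: nyz; rewrite ez.
Qed.

Lemma twins_adj a b c d :
  twins a c -> twins b d -> a <> b -> c <> d -> (E a b <-> E c d).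
Proof.
move=> tac tbd nab ncd.
have [ebc|nbc] := pselect (b = c).
  rewrite -ebc in tac ncd *.
  have [<-|nad] := pselect (a = d); first exact: adjC.
  rewrite (adjC a); apply: iff_trans (tbd a nab nad) _.
  rewrite (adjC d); apply: (tac d) => eda.
  - by apply: nad; rewrite eda.
  - by apply: ncd; rewrite eda.
have nba : b <> a by move=> eba; apply: nab.
apply: iff_trans (tac b nba nbc) _.
rewrite (adjC c) (adjC c d); apply: (tbd c) => ecb.
- by apply: nbc; rewrite ecb.
- by apply: ncd; rewrite ecb.
Qed.

Lemma twin_map_adj (theta : V -> V) :
  injective theta -> (forall x, twins (theta x) x) ->
  forall x y, E x y <-> E (theta x) (theta y).
Proof.
move=> theta_inj theta_twin x y.
have [<-|nxy] := pselect (x = y); first by split=> /E_irr.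
apply: twins_adj; [exact: twins_sym|exact: twins_sym|by []|].
by move/theta_inj.
Qed.

End Twins.

Definition embedding (V V' : Type) (E : V -> V -> Prop) (E' : V' -> V' -> Prop)
    (f : V -> V') : Prop :=
  injective f /\ forall x y, E x y <-> E' (f x) (f y).

Lemma embedding_comp (U V W : Type) (EU : U -> U -> Prop) (EV : V -> V -> Prop)
    (EW : W -> W -> Prop) (f : U -> V) (g : V -> W) :
  embedding EU EV f -> embedding EV EW g -> embedding EU EW (g \o f).
Proof.
move=> [f_inj fE] [g_inj gE]; split; first exact: inj_comp.
by move=> x y; apply: iff_trans (fE x y) (gE _ _).
Qed.

Lemma embedding_twins (V V' : Type) (E : V -> V -> Prop) (E' : V' -> V' -> Prop)
    (f : V -> V') x y :
  embedding E E' f -> twins E' (f x) (f y) -> twins E x y.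
Proof.
move=> [f_inj fE] t z zx zy; rewrite !fE.
by apply: t => /f_inj ?; [apply: zx|apply: zy].
Qed.

Lemma iter_injective (T : Type) (f : T -> T) :
  injective f -> forall n, injective (iter n f).
Proof. by move=> f_inj; elim=> // n IH x y /f_inj/IH. Qed.

Lemma injective_iter_id (K : finType) (g : K -> K) :
  injective g -> exists2 m, 0 < m & forall c, iter m g c = c.
Proof.
move=> g_inj; pose p := perm g_inj.
exists #[p]%g => [|c]; first exact: order_gt0.
by rewrite -(eq_iter (permE g_inj)) -permX expg_order perm1.
Qed.

Section FiniteClasses.

Variables (V : Type) (K : finType) (cls : V -> K) (phi : V -> V).
Hypothesis phi_reflect : forall x y, cls (phi x) = cls (phi y) -> cls x = cls y.

(* That [cls (phi x)] depends only on [cls x] is a counting argument: [g] is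
   extended by the identity off the image of [cls], which makes it an
   injection, hence a bijection, of the finite type [K]. *)
Lemma class_action : exists2 g : K -> K, injective g & forall x, cls (phi x) = g (cls x).
Proof.
pose g c := if pselect (exists x, cls x = c) is left hc
            then cls (phi (sval (cid hc))) else c.
have gE x : exists2 y, cls y = cls x & g (cls x) = cls (phi y).
  rewrite /g; case: pselect => [hc|[]]; last by exists x.
  by exists (sval (cid hc)); first by case: cid.
have g_out c : ~ (exists x, cls x = c) -> g c = c.
  by rewrite /g; case: pselect.
have g_inj : injective g.
  move=> c1 c2.
  have [[x1 <-]|n1] := pselect (exists x, cls x = c1);
  have [[x2 <-]|n2] := pselect (exists x, cls x = c2).
  - have [y1 <- ->] := gE x1; have [y2 <- ->] := gE x2; exact: phi_reflect.
  - by have [y1 _ ->] := gE x1; rewrite g_out // => e; case: n2; exists (phi y1).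
  - by have [y2 _ ->] := gE x2; rewrite g_out // => e; case: n1; exists (phi y2).
  - by rewrite !g_out.
exists g => // x; have [ginv gK ginvK] := injF_bij g_inj.
have [[x1 e1]|n1] := pselect (exists x1, cls x1 = ginv (cls (phi x))).
  have [y1 ey1 gy1] := gE x1.
  have e : cls (phi y1) = cls (phi x) by rewrite -gy1 e1 ginvK.
  by rewrite -(phi_reflect e) ey1 gy1 e.
have := g_out _ n1; rewrite ginvK => e.
by case: n1; exists (phi x).
Qed.

Lemma iter_class_fixed : exists2 m, 0 < m & forall x, cls (iter m phi x) = cls x.
Proof.
have [g g_inj gE] := class_action.
have [m m_gt0 gm] := injective_iter_id g_inj.
exists m => // x; rewrite -[RHS]gm.
by elim: m {m_gt0 gm} => //= m IH; rewrite gE IH.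
Qed.

End FiniteClasses.

Lemma schroeder_bernstein_shift (V : Type) (S : V -> Prop) (psi : V -> V) :
  injective psi -> (forall x, S (psi x)) ->
  exists theta : V -> V, [/\ injective theta, forall x, S (theta x),
    forall s, S s -> exists x, theta x = s & forall x, theta x = psi x \/ theta x = x].
Proof.
move=> psi_inj psiS.
pose chain x := exists n y, ~ S y /\ x = iter n psi y.
pose theta x := if pselect (chain x) then psi x else x.
have theta_in x : chain x -> theta x = psi x by rewrite /theta; case: pselect.
have theta_out x : ~ chain x -> theta x = x by rewrite /theta; case: pselect.
exists theta; split.
- move=> x y.
  have [cx|nx] := pselect (chain x); have [cy|ny] := pselect (chain y).
  + by rewrite !theta_in //; apply: psi_inj.
  + rewrite theta_in // theta_out // => e; case: ny; case: cx => n [z [nz ex]].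
    by exists n.+1, z; rewrite -e ex.
  + rewrite theta_out // theta_in // => e; case: nx; case: cy => n [z [nz ey]].
    by exists n.+1, z; rewrite e ey.
  + by rewrite !theta_out.
- move=> x; have [cx|nx] := pselect (chain x); first by rewrite theta_in.
  rewrite theta_out //; apply: contrapT => nS; apply: nx.
  by exists 0, x.
- move=> s Ss; have [cs|ns] := pselect (chain s); last by exists s; rewrite theta_out.
  case: cs => [[|n] [y [ny e]]]; first by rewrite e in Ss.
  by exists (iter n psi y); rewrite theta_in ?e //; exists n, y.
- move=> x; have [cx|nx] := pselect (chain x).
  + by left; rewrite theta_in.
  + by right; rewrite theta_out.
Qed.

Lemma bijective_factor (A B C : Type) (h : B -> A) (theta : C -> A) :
  injective h -> injective theta ->
  (forall c, exists b, h b = theta c) -> (forall b, exists c, theta c = h b) ->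
  exists2 f : C -> B, bijective f & forall c, h (f c) = theta c.
Proof.
move=> h_inj theta_inj to_h from_h.
pose f c := sval (cid (to_h c)); pose g b := sval (cid (from_h b)).
have hf c : h (f c) = theta c by rewrite /f; case: cid.
have thetag b : theta (g b) = h b by rewrite /g; case: cid.
exists f => //; exists g => [c|b].
  by apply: theta_inj; rewrite thetag hf.
by apply: h_inj; rewrite hf thetag.
Qed.

Section LexSum.

Variables (J : finType) (H : J -> J -> Prop) (L : J -> Type)
  (EL : forall j, L j -> L j -> Prop).
Arguments EL : clear implicits.
Local Notation E := (lexsum_adj H EL).

Lemma lexsum_adj_in j (x y : L j) :
  E (existT L j x) (existT L j y) <-> EL j x y.
Proof.
split=> [e|]; last exact: lexsum_in.
have adj_tagged u v : E u v -> tag u = tag v -> EL (tag u) (tagged u) (tagged_as u v).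
  by move=> [k x' y' exy _|i k x' y' nik _ /= eik]; [rewrite tagged_asE|case: nik].
by have := adj_tagged _ _ e erefl; rewrite tagged_asE.
Qed.

Lemma lexsum_adj_out i j (x : L i) (y : L j) :
  i <> j -> (E (existT L i x) (existT L j y) <-> H i j).
Proof.
move=> nij; split=> [e|]; last exact: lexsum_out.
by inversion e; subst.
Qed.

Lemma lexsum_graph : is_graph H -> (forall j, is_graph (EL j)) -> is_graph E.
Proof.
move=> [H_sym _] EL_graph; split.
  move=> u v [j x y /(proj1 (EL_graph j)) e|i j x y nij /H_sym e].
    exact: lexsum_in.
  by apply: lexsum_out => // eji; apply: nij.
by case=> j x /lexsum_adj_in; apply: (proj2 (EL_graph j)).
Qed.

Hypothesis blocks_homogeneous :
  forall j, is_clique (EL j) \/ is_independent (EL j).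

Lemma twins_block j (x y : L j) : twins E (existT L j x) (existT L j y).
Proof.
move=> [k w] nwx nwy; have [ekj|nkj] := pselect (k = j); last first.
  by rewrite !lexsum_adj_out // => ejk; apply: nkj.
subst k; rewrite !lexsum_adj_in.
case: (blocks_homogeneous j) => [clique|indep]; last by split=> /indep.
by split=> _; apply: clique => exw; [apply: nwy|apply: nwx]; rewrite exw.
Qed.

Definition twin_blocks (v : {j : J & L j}) : {set J} :=
  [set j | `[< exists y : L j, twins E (existT L j y) v >]].

Lemma twin_blocksP (E_sym : forall u v, E u v -> E v u) u v :
  twins E u v <-> twin_blocks u = twin_blocks v.
Proof.
split=> [tuv|].
  apply/setP => j; rewrite !inE; apply: asbool_equiv_eq.
  split=> -[y ty]; exists y; first exact: (twins_trans E_sym ty tuv).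
  exact: (twins_trans E_sym ty (twins_sym tuv)).
case: u => j x buv.
have : j \in twin_blocks (existT L j x).
  by rewrite inE; apply/asboolP; exists x; apply: twins_refl.
rewrite buv inE => /asboolP[y ty].
exact: (twins_trans E_sym (@twins_block j x y) ty).
Qed.

End LexSum.

Theorem theorem4p1 (J : finType) (H : J -> J -> Prop) (L : J -> Type)
    (EL : forall j, L j -> L j -> Prop) :
  is_graph H ->
  (forall j, is_graph (EL j)) ->
  (forall j, is_clique (EL j) \/ is_independent (EL j)) ->
  forall (V' : Type) (E' : V' -> V' -> Prop),
    is_graph E' ->
    equimorphic (lexsum_adj H EL) E' ->
    isomorphic (lexsum_adj H EL) E'.
Proof.
move=> H_graph EL_graph homog V' E' _ [[e e_emb] [h h_emb]].
have [E_sym E_irr] := lexsum_graph H_graph EL_graph.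
have phi_emb := embedding_comp e_emb h_emb.
have [m m_gt0 psi_twin] : exists2 m, 0 < m &
    forall x, twin_blocks H EL (iter m (h \o e) x) = twin_blocks H EL x.
  apply: iter_class_fixed => x y /(twin_blocksP homog E_sym) tphi.
  exact/twin_blocksP/(embedding_twins phi_emb).
have psi_inj : injective (iter m (h \o e)) by apply: iter_injective; case: phi_emb.
have psi_in_h x : exists v, h v = iter m (h \o e) x.
  by rewrite -(prednK m_gt0) iterS; exists (e (iter m.-1 (h \o e) x)).
have [theta [theta_inj theta_in_h theta_onto theta_psi]] :=
  @schroeder_bernstein_shift _ (fun s => exists v, h v = s) _ psi_inj psi_in_h.
have theta_twin x : twins (lexsum_adj H EL) (theta x) x.
  by case: (theta_psi x) => ->; [apply/(twin_blocksP homog E_sym)|apply: twins_refl].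
have [f f_bij hf] := bijective_factor (proj1 h_emb) theta_inj theta_in_h
  (fun v => theta_onto _ (ex_intro _ v erefl)).
exists f; split=> // x y.
by rewrite (twin_map_adj E_sym E_irr theta_inj theta_twin) -!hf -(proj2 h_emb).
Qed.
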